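(* Assume the standing setting below and let $\{(x_k,\lambda_k)\}_{k\ge0}$ and directions $p_k$ ($k\ge1$) be generated by the Projected Newton iteration, where for each $k\ge1$ the step-length $\gamma_k\in(0,1]$ satisfies $\lambda_k>0$, the sufficient decrease condition $$\tfrac12\|F(x_k,\lambda_k)\|^2\le\left(\tfrac12-c\gamma_k\right)\|F(x_{k-1},\lambda_{k-1})\|^2$$ for a fixed $c\in(0,1)$, and the lower bound $$\gamma_k\ge\min\left(1,\ \frac{2(1-c)\tau\|F(x_{k-1},\lambda_{k-1})\|^2}{\zeta\|p_k\|^2}\right)$$ for fixed constants $\tau\in(0,1)$ and $\zeta>0$ (whenever $F(x_{k-1},\lambda_{k-1})\ne0$). Then either $\|F(x_k,\lambda_k)\|=0$ for some $k\ge0$, or $$\lim_{k\to\infty}\min\left(\|F(x_k,\lambda_k)\|,\ \frac{\|F(x_k,\lambda_k)\|^2}{\|p_{k+1}\|}\right)=0.$$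
   Context: Standing setting. $A\in\mathbb{R}^{m\times n}$ ($m\ge n$), $b\in\mathbb{R}^m$ with $\|b\|\ge\sigma>0$. $F(x,\lambda)=\begin{pmatrix}\lambda A^T(Ax-b)+x\\ \tfrac12\|Ax-b\|^2-\tfrac{\sigma^2}{2}\end{pmatrix}$. Golub–Kahan bidiagonalization (Bidiag1): $u_0=b/\|b\|$, $\nu_0v_{-1}=0$, for $j=0,1,\dots$: $r_j=A^Tu_j-\nu_jv_{j-1}$, $\mu_j=\|r_j\|$, $v_j=r_j/\mu_j$, $p_j=Av_j-\mu_ju_j$, $\nu_{j+1}=\|p_j\|$, $u_{j+1}=p_j/\nu_{j+1}$; no breakdown (all $\mu_j,\nu_j>0$) and exact orthonormality of $\{v_j\}$ and $\{u_j\}$ are assumed. $V_k=[v_0,\dots,v_{k-1}]$; $B_{k+1,k}\in\mathbb{R}^{(k+1)\times k}$ lower bidiagonal with diagonal $\mu_0,\dots,\mu_{k-1}$, subdiagonal $\nu_1,\dots,\nu_k$; $c_{k+1}=(\|b\|,0,\dots,0)^T\in\mathbb{R}^{k+1}$. $F^{(k)}(y,\lambda)=\begin{pmatrix}\lambda B_{k+1,k}^T(B_{k+1,k}y-c_{k+1})+y\\ \tfrac12\|B_{k+1,k}y-c_{k+1}\|^2-\tfrac{\sigma^2}{2}\end{pmatrix}$, $J^{(k)}$ its Jacobian in $(y,\lambda)$. Projected Newton iteration: $\lambda_0>0$, $x_0=0$, $\bar y_0=0\in\mathbb{R}^1$. For $k\ge1$: $(\Delta y_k,\Delta\lambda_k)=-J^{(k)}(\bar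 y_{k-1},\lambda_{k-1})^{-1}F^{(k)}(\bar y_{k-1},\lambda_{k-1})$, $p_k=(V_k\Delta y_k,\Delta\lambda_k)\in\mathbb{R}^{n+1}$, $y_k=\bar y_{k-1}+\gamma_k\Delta y_k$, $\lambda_k=\lambda_{k-1}+\gamma_k\Delta\lambda_k$, $\bar y_k=(y_k^T,0)^T$, $x_k=V_ky_k$. *)

From HB Require Import structures.
From mathcomp Require Import all_boot all_order all_algebra.
Set Implicit Arguments. Unset Strict Implicit. Unset Printing Implicit Defensive.
Import Order.TTheory GRing.Theory Num.Theory.
Local Open Scope ring_scope.

Section PN.
Variable R : archiRcfType.

Definition vnorm k (v : 'cV[R]_k) : R := Num.sqrt (\sum_i v i 0 ^+ 2).

(* (y, a) in R^(k+1) with last coordinate a; and the corresponding projections *)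
Definition ext k (y : 'cV[R]_k) (a : R) : 'cV[R]_k.+1 :=
  \col_i (if unlift ord_max i is Some j then y j 0 else a).
Definition top k (v : 'cV[R]_k.+1) : 'cV[R]_k := \col_j v (lift ord_max j) 0.
Definition lst k (v : 'cV[R]_k.+1) : R := v ord_max 0.

Variables (m n : nat) (A : 'M[R]_(m, n)) (b : 'cV[R]_m) (sigma : R).

Definition Ffun (x : 'cV[R]_n) (lam : R) : 'cV[R]_n.+1 :=
  ext (lam *: (A^T *m (A *m x - b)) + x)
      (2^-1 * vnorm (A *m x - b) ^+ 2 - sigma ^+ 2 / 2).

(* Golub-Kahan bidiagonalization (Bidiag1).  gk j = (u_j, v_{j-1}, nu_j),
   with v_{-1} = 0 and nu_0 = 0. *)
Fixpoint gk (j : nat) : 'cV[R]_m * 'cV[R]_n * R :=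
  match j with
  | 0 => ((vnorm b)^-1 *: b, 0, 0)
  | j'.+1 =>
      let: (u, vprev, nu) := gk j' in
      let r := A^T *m u - nu *: vprev in
      let mu := vnorm r in
      let v := mu^-1 *: r in
      let p := A *m v - mu *: u in
      let nu' := vnorm p in
      (nu'^-1 *: p, v, nu')
  end.

Definition gk_u j := (gk j).1.1.
Definition gk_nu j := (gk j).2.
Definition gk_v j := (gk j.+1).1.2.
Definition gk_mu j := vnorm (A^T *m gk_u j - gk_nu j *: (gk j).1.2).

Definition Vmat k : 'M[R]_(n, k) := \matrix_(i, l) gk_v l i 0.
Definition Bmat k : 'M[R]_(k.+1, k) :=
  \matrix_(i, l) (if val i == val l then gk_mu l
                  else if val i == (val l).+1 then gk_nu i else 0).
Definition cvec k : 'cV[R]_k.+1 := \col_i (if val i == 0%N then vnorm b else 0).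

Definition Fk k (y : 'cV[R]_k) (lam : R) : 'cV[R]_k.+1 :=
  ext (lam *: ((Bmat k)^T *m (Bmat k *m y - cvec k)) + y)
      (2^-1 * vnorm (Bmat k *m y - cvec k) ^+ 2 - sigma ^+ 2 / 2).

(* J^{(k)}(y, lambda): the Jacobian of F^{(k)} in (y, lambda), written out *)
Definition Jk k (y : 'cV[R]_k) (lam : R) : 'M[R]_k.+1 :=
  let g := (Bmat k)^T *m (Bmat k *m y - cvec k) in
  \matrix_(i, j)
    match unlift ord_max i, unlift ord_max j with
    | Some i', Some j' => (lam *: ((Bmat k)^T *m Bmat k) + 1%:M) i' j'
    | Some i', None => g i' 0
    | None, Some j' => g j' 0
    | None, None => 0
    end.

Definition newton_dir k (y : 'cV[R]_k) (lam : R) : 'cV[R]_k.+1 :=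
  - (invmx (Jk y lam) *m Fk y lam).

Variables (lam0 : R) (gamma : nat -> R).

(* pn k = (ybar_k, lambda_k), ybar_k in R^(k+1) *)
Fixpoint pn (k : nat) : 'cV[R]_k.+1 * R :=
  match k return 'cV[R]_k.+1 * R with
  | 0 => (0, lam0)
  | k'.+1 =>
      let: (yb, l) := pn k' in
      let d := newton_dir yb l in
      let y := yb + gamma k'.+1 *: top d in
      (ext y 0, l + gamma k'.+1 * lst d)
  end.

Definition lam_it k := (pn k).2.
Definition ybar_it k := (pn k).1.
(* x_k = V_k y_k  (for k = 0 this is 0) *)
Definition x_it k : 'cV[R]_n := Vmat k *m top (ybar_it k).
(* J^{(k+1)} at (ybar_k, lambda_k), the matrix inverted at step k+1 *)
Definition J_it k := Jk (ybar_it k) (lam_it k).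
(* p_{k+1} = (V_{k+1} Delta y_{k+1}, Delta lambda_{k+1}) *)
Definition p_it k : 'cV[R]_n.+1 :=
  let d := newton_dir (ybar_it k) (lam_it k) in
  ext (Vmat k.+1 *m top d) (lst d).
Definition F_it k := Ffun (x_it k) (lam_it k).

End PN.

From HB Require Import structures.
From mathcomp Require Import all_boot all_order all_algebra.
From mathcomp Require Import ring lra.
From Stdlib Require Import Classical.
Set Implicit Arguments. Unset Strict Implicit. Unset Printing Implicit Defensive.
Import Order.TTheory GRing.Theory Num.Theory.
Local Open Scope ring_scope.

(* Sufficient decrease makes gamma_(k+1) ||F_k||^2 the decrement of the
   nonnegative merit sequence ||F_k||^2, so these products are summable and
   tend to 0.  The lower bound on gamma_(k+1) turns this into
   min(1, K) min(||F_k||, ||F_k||^2 / ||p_(k+1)||)^2 <= gamma_(k+1) ||F_k||^2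
   with K = 2 (1 - c) tau / zeta. *)

Lemma decrement_eventually_lt (R : archiRealFieldType) (f d : nat -> R) (eps : R) :
  0 < eps -> (forall k, 0 <= f k) -> (forall k, 0 <= d k) ->
  (forall k, f k.+1 + d k <= f k) ->
  exists N, forall k, (N <= k)%N -> d k < eps.
Proof.
move=> eps_gt0 f_ge0 d_ge0 f_decr.
have f_noninc k : f k.+1 <= f k by have := f_decr k; have := d_ge0 k; lra.
have f_le := Order.NatMonotonyTheory.nonincnP f_noninc.
(* Otherwise d k >= eps infinitely often, and f would fall below 0 after
   more than f 0 / eps such drops. *)
apply: NNPP => no_N.
have often_big : forall N, exists2 k, (N <= k)%N & eps <= d k.
  move=> N; apply: NNPP => no_k; apply: no_N; exists N => k Nk.
  by rewrite ltNge; apply/negP => eps_le; apply: no_k; exists k.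
have total_drop : forall j : nat, exists N, j%:R * eps <= f 0%N - f N.
  elim=> [|j [N dropN]]; first by exists 0%N; rewrite mul0r subrr.
  have [k Nk eps_le] := often_big N; exists k.+1.
  have := f_le _ _ Nk; have := f_decr k; rewrite mulrSr mulrDl mul1r; lra.
have f0_ge0 : 0 <= f 0%N / eps by rewrite divr_ge0 // ltW.
have := archi_boundP f0_ge0; rewrite ltr_pdivrMr //.
have [N dropN] := total_drop (Num.Def.archi_bound (f 0%N / eps)).
have := f_ge0 N; lra.
Qed.

Lemma min_sqr_le (R : realFieldType) (K g s q : R) :
  0 < K -> 0 <= s -> 0 <= q -> Num.min 1 (K * s ^+ 2 / q ^+ 2) <= g ->
  Num.min 1 K * Num.min s (s ^+ 2 / q) ^+ 2 <= g * s ^+ 2.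
Proof.
move=> K_gt0 s_ge0 q_ge0 g_ge.
have minK_ge0 : 0 <= Num.min 1 K by rewrite le_min ler01 ltW.
apply: le_trans (ler_wpM2r (sqr_ge0 s) g_ge).
(* For q = 0 the left-hand side vanishes, since s / 0 = 0. *)
have [q_eq0|q_neq0] := eqVneq q 0.
  apply: le_trans (_ : _ <= 0) _.
    by rewrite q_eq0 invr0 mulr0 (min_idPr s_ge0) expr0n mulr0.
  by rewrite mulr_ge0 ?sqr_ge0 // le_min ler01 divr_ge0 ?sqr_ge0 // mulr_ge0 ?sqr_ge0 ?ltW.
set t := s ^+ 2 / q.
have t_ge0 : 0 <= t by rewrite divr_ge0 ?sqr_ge0.
rewrite [leRHS]minr_pMl ?sqr_ge0 // mul1r.
have -> : K * s ^+ 2 / q ^+ 2 * s ^+ 2 = K * t ^+ 2 by rewrite /t; field.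
have m_ge0 : 0 <= Num.min s t by rewrite le_min s_ge0.
have m_le_s : Num.min s t ^+ 2 <= s ^+ 2 by rewrite ler_pXn2r ?nnegrE // ge_min lexx.
have m_le_t : Num.min s t ^+ 2 <= t ^+ 2.
  by rewrite ler_pXn2r ?nnegrE // ge_min lexx orbT.
rewrite le_min; apply/andP; split.
- by rewrite -[leRHS]mul1r; apply: ler_pM; rewrite ?sqr_ge0 ?ge_min ?lexx.
- by apply: ler_pM; rewrite ?sqr_ge0 ?ge_min ?lexx ?orbT.
Qed.

Lemma min_residual_ratio_vanishes (R : archiRealFieldType) (c K : R)
    (gamma s q : nat -> R) :
  0 < c -> 0 < K -> (forall k, 0 <= s k) -> (forall k, 0 <= q k) ->
  (forall k, 0 <= gamma k.+1) ->
  (forall k, 2^-1 * s k.+1 ^+ 2 <= (2^-1 - c * gamma k.+1) * s k ^+ 2) ->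
  (forall k, Num.min 1 (K * s k ^+ 2 / q k ^+ 2) <= gamma k.+1) ->
  forall eps, 0 < eps -> exists N, forall k, (N <= k)%N ->
    `|Num.min (s k) (s k ^+ 2 / q k)| < eps.
Proof.
move=> c_gt0 K_gt0 s_ge0 q_ge0 gamma_ge0 decrease gamma_ge eps eps_gt0.
have minK_gt0 : 0 < Num.min 1 K by rewrite lt_min ltr01.
have merit_decr k : s k.+1 ^+ 2 + 2 * c * (gamma k.+1 * s k ^+ 2) <= s k ^+ 2.
  by have := decrease k; lra.
have decrement_ge0 k : 0 <= 2 * c * (gamma k.+1 * s k ^+ 2).
  by rewrite !mulr_ge0 ?s_ge0 ?gamma_ge0 ?ltW.
have bound_gt0 : 0 < 2 * c * (Num.min 1 K * eps ^+ 2).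
  by rewrite !mulr_gt0 ?exprn_gt0.
have [N small] := decrement_eventually_lt bound_gt0 (fun k => sqr_ge0 (s k))
  decrement_ge0 merit_decr.
exists N => k Nk.
have m_ge0 : 0 <= Num.min (s k) (s k ^+ 2 / q k).
  by rewrite le_min s_ge0 divr_ge0 ?sqr_ge0.
rewrite ger0_norm // -(ltr_pXn2r (_ : 0 < 2)%N) ?nnegrE ?m_ge0 ?ltW //.
rewrite -(ltr_pM2l minK_gt0) -(ltr_pM2l (_ : 0 < 2 * c)) ?mulr_gt0 //.
apply: le_lt_trans _ (small k Nk); rewrite ler_pM2l ?mulr_gt0 //.
exact: min_sqr_le.
Qed.

Lemma vnorm0 (R : archiRcfType) k : vnorm (0 : 'cV[R]_k) = 0.
Proof. by rewrite /vnorm big1 ?sqrtr0 // => i _; rewrite mxE expr0n. Qed.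

Theorem theorem4p2 (R : archiRcfType) (m n : nat) (A : 'M[R]_(m, n))
  (b : 'cV[R]_m) (sigma lam0 c tau zeta : R) (gamma : nat -> R) :
  (n <= m)%N -> 0 < sigma -> sigma <= vnorm b ->
  0 < lam0 -> 0 < c < 1 -> 0 < tau < 1 -> 0 < zeta ->
  (forall k : nat,
     (forall j : nat, (j <= k)%N -> F_it A b sigma lam0 gamma j != 0) ->
     [/\ J_it A b sigma lam0 gamma k \in unitmx,
         0 < gamma k.+1 <= 1,
         0 < lam_it A b sigma lam0 gamma k.+1,
         2^-1 * vnorm (F_it A b sigma lam0 gamma k.+1) ^+ 2
           <= (2^-1 - c * gamma k.+1) * vnorm (F_it A b sigma lam0 gamma k) ^+ 2
       & Num.min 1 (2 * (1 - c) * tau * vnorm (F_it A b sigma lam0 gamma k) ^+ 2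
                      / (zeta * vnorm (p_it A b sigma lam0 gamma k) ^+ 2))
           <= gamma k.+1]) ->
  (exists k : nat, vnorm (F_it A b sigma lam0 gamma k) = 0) \/
  (forall eps : R, 0 < eps -> exists N : nat, forall k : nat, (N <= k)%N ->
     `| Num.min (vnorm (F_it A b sigma lam0 gamma k))
               (vnorm (F_it A b sigma lam0 gamma k) ^+ 2
                  / vnorm (p_it A b sigma lam0 gamma k)) | < eps).
Proof.
move=> _ _ _ _ /andP[c_gt0 c_lt1] /andP[tau_gt0 _] zeta_gt0 step.
set F := F_it A b sigma lam0 gamma in step *.
set p := p_it A b sigma lam0 gamma in step *.
case: (classic (exists k, vnorm (F k) = 0)) => [|no_zero]; [by left | right].
have F_neq0 j : F j != 0 by apply/eqP => Fj0; apply: no_zero; exists j; rewrite Fj0 vnorm0.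
have {}step k := step k (fun j _ => F_neq0 j).
set K := 2 * (1 - c) * tau / zeta.
apply: (@min_residual_ratio_vanishes R c K gamma) => //.
- by rewrite /K !mulr_gt0 ?invr_gt0 ?subr_gt0.
- by move=> k; apply: sqrtr_ge0.
- by move=> k; apply: sqrtr_ge0.
- by move=> k; have [_ /andP[/ltW]] := step k.
- by move=> k; have [] := step k.
move=> k; have [_ _ _ _] := step k.
suff -> : K * vnorm (F k) ^+ 2 / vnorm (p k) ^+ 2
  = 2 * (1 - c) * tau * vnorm (F k) ^+ 2 / (zeta * vnorm (p k) ^+ 2) by [].
by rewrite /K (invfM zeta); ring.
Qed.
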